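(* Let $\Phi:\mathbb{R}^2\to\mathbb{R}^2$, $\Phi(u,v)=(\varphi(u,v),\psi(u,v))$, where $\varphi$ and $\psi$ are harmonic functions on $\mathbb{R}^2$. Then $\inf_{\mathbb{R}^2}|J_\Phi|=0$, where $J_\Phi=\varphi_u\psi_v-\varphi_v\psi_u$, unless $\Phi$ is an affine map. *)

From Stdlib Require Import Reals.
From Coquelicot Require Import Coquelicot.
Open Scope R_scope.

Definition du (f : R -> R -> R) : R -> R -> R :=
  fun u v => Derive (fun x => f x v) u.
Definition dv (f : R -> R -> R) : R -> R -> R :=
  fun u v => Derive (fun y => f u y) v.

Definition has_partials (f : R -> R -> R) : Prop :=
  forall u v, ex_derive (fun x => f x v) u /\ ex_derive (fun y => f u y) v.

Definition C2 (f : R -> R -> R) : Prop :=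
  has_partials f /\ has_partials (du f) /\ has_partials (dv f) /\
  forall u v,
    continuity_2d_pt f u v /\
    continuity_2d_pt (du f) u v /\ continuity_2d_pt (dv f) u v /\
    continuity_2d_pt (du (du f)) u v /\ continuity_2d_pt (dv (du f)) u v /\
    continuity_2d_pt (du (dv f)) u v /\ continuity_2d_pt (dv (dv f)) u v.

Definition harmonic (f : R -> R -> R) : Prop :=
  C2 f /\ forall u v, du (du f) u v + dv (dv f) u v = 0.

Definition jac (phi psi : R -> R -> R) (u v : R) : R :=
  du phi u v * dv psi u v - dv phi u v * du psi u v.

Definition affine_map (phi psi : R -> R -> R) : Prop :=
  exists a b c d e g : R, forall u v,
    phi u v = a * u + b * v + c /\ psi u v = d * u + e * v + g.

(* If |J| >= l > 0 everywhere, J has a constant sign s = +-1 by connectedness.  The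
   functions f = phi_u - i phi_v and g = psi_u - i psi_v are entire, and
   |g - i s f|^2 = |grad psi|^2 + |grad phi|^2 + 2 s J >= 2 l.  So 1 / (g - i s f) is a
   bounded entire function; by Liouville's theorem g - i s f has constant modulus, which
   then bounds |f| and |g|.  Liouville again makes f and g constant, i.e. Phi affine.

   Liouville's theorem is proved without Cauchy's formula: for a bounded entire
   f = P + i Q, the circle average A(r) = Re int_0^(2 PI) f(z0 + r e^(it)) e^(-it) dt is
   bounded and satisfies r A'(r) = A(r), which forces A'(0) = 2 PI P_u(z0) to vanish. *)

From Stdlib Require Import Reals Lra.
From Coquelicot Require Import Coquelicot.
Open Scope R_scope.

(** * Calculus in two real variables *)

(* Coquelicot's derivative rules are stated for abstract normed modules and do
   not unify with [Rplus]/[Rmult] directly. *)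
Lemma is_derive_Rplus f g x a b :
  is_derive f x a -> is_derive g x b -> is_derive (fun t => f t + g t) x (a + b).
Proof. intros; apply (is_derive_plus f g); auto. Qed.

Lemma is_derive_Rminus f g x a b :
  is_derive f x a -> is_derive g x b -> is_derive (fun t => f t - g t) x (a - b).
Proof. intros; apply (is_derive_minus f g); auto. Qed.

Lemma is_derive_Ropp f x a : is_derive f x a -> is_derive (fun t => - f t) x (- a).
Proof. intros; apply (is_derive_opp f); auto. Qed.

Lemma is_derive_Rmult f g x a b :
  is_derive f x a -> is_derive g x b ->
  is_derive (fun t => f t * g t) x (a * g x + f x * b).
Proof. intros; apply (is_derive_mult f g); auto. intros; apply Rmult_comm. Qed.

Lemma is_derive_Rconst (c x : R) : is_derive (fun _ : R => c) x 0.
Proof. apply (is_derive_const (V := R_NormedModule) c x). Qed.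

Lemma is_derive_Rid (x : R) : is_derive (fun t : R => t) x 1.
Proof. apply (is_derive_id (K := R_AbsRing) x). Qed.

Lemma is_derive_val (f : R -> R) (x a b : R) : is_derive f x a -> a = b -> is_derive f x b.
Proof. intros H <-; exact H. Qed.

Lemma deriv0_const (g : R -> R) : (forall x, is_derive g x 0) -> forall x y, g x = g y.
Proof.
  intros H x y. destruct (MVT_gen g y x (fun _ => 0)) as [c [_ E]].
  - intros; apply H.
  - intros; apply continuity_pt_filterlim, (ex_derive_continuous g). eexists; apply H.
  - simpl in E. lra.
Qed.

Lemma Rabs_between a b c : Rmin a b <= c <= Rmax a b -> Rabs (c - a) <= Rabs (b - a).
Proof.
  unfold Rmin, Rmax; destruct (Rle_dec a b); intros; unfold Rabs;
  repeat destruct Rcase_abs; lra.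
Qed.

Lemma mean_value_bound (g dg : R -> R) a b L e :
  (forall c, Rmin a b <= c <= Rmax a b -> is_derive g c (dg c) /\ Rabs (dg c - L) <= e) ->
  Rabs (g b - g a - L * (b - a)) <= e * Rabs (b - a).
Proof.
  intros Hg. destruct (MVT_gen g a b dg) as [c [Hc Ec]].
  - intros c Hc. apply Hg. lra.
  - intros c Hc. apply continuity_pt_filterlim, (ex_derive_continuous g).
    eexists. apply Hg, Hc.
  - rewrite Ec. replace (dg c * (b - a) - L * (b - a)) with ((dg c - L) * (b - a)) by ring.
    rewrite Rabs_mult. apply Rmult_le_compat_r; [apply Rabs_pos | apply Hg, Hc].
Qed.

Lemma continuity_2d_pt_comp f g h x y :
  continuity_2d_pt f (g x y) (h x y) -> continuity_2d_pt g x y -> continuity_2d_pt h x y ->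
  continuity_2d_pt (fun u v => f (g u v) (h u v)) x y.
Proof.
  intros Hf Hg Hh eps.
  destruct (Hf eps) as [d1 H1]. destruct (Hg d1) as [d2 H2]. destruct (Hh d1) as [d3 H3].
  exists (mkposreal _ (Rmin_pos _ _ (cond_pos d2) (cond_pos d3))); simpl; intros u v Hu Hv.
  apply H1.
  - apply H2; eapply Rlt_le_trans; eauto; apply Rmin_l.
  - apply H3; eapply Rlt_le_trans; eauto; apply Rmin_r.
Qed.

Lemma continuity_2d_pt_snd f x y : continuity_2d_pt f x y -> continuous (fun t => f x t) y.
Proof.
  intros Hf. apply continuity_pt_filterlim. intros eps Heps.
  destruct (Hf (mkposreal _ Heps)) as [d H].
  exists d; split; [apply cond_pos|]. intros t [_ Ht]. simpl in *. unfold R_dist in *.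
  apply H; [rewrite Rminus_eq_0, Rabs_R0; apply cond_pos | exact Ht].
Qed.

Lemma continuity_2d_pt_snd_comp g x y : continuity g -> continuity_2d_pt (fun _ v => g v) x y.
Proof.
  intros Hg. apply (continuity_1d_2d_pt_comp g (fun _ v => v));
  [apply Hg | apply continuity_2d_pt_id2].
Qed.

Definition C1_partials (f fu fv : R -> R -> R) : Prop :=
  forall u v, is_derive (fun s => f s v) u (fu u v) /\ is_derive (fun s => f u s) v (fv u v) /\
    continuity_2d_pt fu u v /\ continuity_2d_pt fv u v.

Lemma C1_differentiable f fu fv x y :
  C1_partials f fu fv -> differentiable_pt_lim f x y (fu x y) (fv x y).
Proof.
  intros Hf eps.
  destruct (Hf x y) as [_ [_ [Cu Cv]]].
  destruct (Cu (pos_div_2 eps)) as [d1 Hd1]. destruct (Cv (pos_div_2 eps)) as [d2 Hd2].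
  simpl in Hd1, Hd2.
  exists (mkposreal _ (Rmin_pos _ _ (cond_pos d1) (cond_pos d2))); simpl; intros u v Hu Hv.
  pose proof (Rmin_l d1 d2); pose proof (Rmin_r d1 d2).
  assert (Eu : Rabs (f u v - f x v - fu x y * (u - x)) <= eps / 2 * Rabs (u - x)).
  { apply (mean_value_bound (fun s => f s v) (fun s => fu s v)). intros c Hc.
    split; [apply Hf|]. left. apply Hd1; [|lra].
    eapply Rle_lt_trans; [apply Rabs_between, Hc | lra]. }
  assert (Ev : Rabs (f x v - f x y - fv x y * (v - y)) <= eps / 2 * Rabs (v - y)).
  { apply (mean_value_bound (fun s => f x s) (fun s => fv x s)). intros c Hc.
    split; [apply Hf|]. left. apply Hd2; [rewrite Rminus_eq_0, Rabs_R0; apply cond_pos|].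
    eapply Rle_lt_trans; [apply Rabs_between, Hc | lra]. }
  replace (f u v - f x y - (fu x y * (u - x) + fv x y * (v - y)))
    with ((f u v - f x v - fu x y * (u - x)) + (f x v - f x y - fv x y * (v - y))) by ring.
  eapply Rle_trans; [apply Rabs_triang|].
  pose proof (Rmax_l (Rabs (u - x)) (Rabs (v - y))).
  pose proof (Rmax_r (Rabs (u - x)) (Rabs (v - y))).
  pose proof (cond_pos eps). nra.
Qed.

Lemma C1_continuity_2d_pt f fu fv u v : C1_partials f fu fv -> continuity_2d_pt f u v.
Proof.
  intros Hf. apply differentiable_continuity_pt.
  exists (fu u v), (fv u v). apply (C1_differentiable f fu fv u v Hf).
Qed.

Lemma C1_is_derive_comp f fu fv g h x dg dh :
  C1_partials f fu fv -> is_derive g x dg -> is_derive h x dh ->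
  is_derive (fun t => f (g t) (h t)) x (fu (g x) (h x) * dg + fv (g x) (h x) * dh).
Proof.
  intros Hf Hg Hh. apply is_derive_Reals, derivable_pt_lim_comp_2d;
  [apply C1_differentiable, Hf | apply is_derive_Reals, Hg | apply is_derive_Reals, Hh].
Qed.

Lemma C1_ext f fu fv gu gv :
  C1_partials f fu fv -> (forall u v, fu u v = gu u v) -> (forall u v, fv u v = gv u v) ->
  C1_partials f gu gv.
Proof.
  intros Hf Eu Ev u v. destruct (Hf u v) as [Du [Dv [Cu Cv]]].
  rewrite <- Eu, <- Ev. split; [|split; [|split]]; auto.
  - apply (continuity_2d_pt_ext fu); auto.
  - apply (continuity_2d_pt_ext fv); auto.
Qed.

Lemma C1_const c : C1_partials (fun _ _ => c) (fun _ _ => 0) (fun _ _ => 0).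
Proof.
  intros u v. split; [|split; [|split]];
  first [apply is_derive_Rconst | apply continuity_2d_pt_const].
Qed.

Lemma C1_opp f fu fv :
  C1_partials f fu fv ->
  C1_partials (fun u v => - f u v) (fun u v => - fu u v) (fun u v => - fv u v).
Proof.
  intros Hf u v. destruct (Hf u v) as [Du [Dv [Cu Cv]]].
  split; [|split; [|split]]; try apply is_derive_Ropp; try apply continuity_2d_pt_opp; auto.
Qed.

Lemma C1_plus f fu fv g gu gv : C1_partials f fu fv -> C1_partials g gu gv ->
  C1_partials (fun u v => f u v + g u v) (fun u v => fu u v + gu u v) (fun u v => fv u v + gv u v).
Proof.
  intros Hf Hg u v. destruct (Hf u v) as [Df [Ef [Cf Kf]]]. destruct (Hg u v) as [Dg [Eg [Cg Kg]]].
  split; [|split; [|split]]; try apply is_derive_Rplus; try apply continuity_2d_pt_plus; auto.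
Qed.

Lemma C1_mult f fu fv g gu gv : C1_partials f fu fv -> C1_partials g gu gv ->
  C1_partials (fun u v => f u v * g u v)
     (fun u v => fu u v * g u v + f u v * gu u v) (fun u v => fv u v * g u v + f u v * gv u v).
Proof.
  intros Hf Hg u v. destruct (Hf u v) as [Df [Ef [Cf Kf]]]. destruct (Hg u v) as [Dg [Eg [Cg Kg]]].
  pose proof (C1_continuity_2d_pt f fu fv u v Hf); pose proof (C1_continuity_2d_pt g gu gv u v Hg).
  split; [|split; [|split]];
  try (apply (is_derive_Rmult (fun s => f s v) (fun s => g s v)) ||
       apply (is_derive_Rmult (fun s => f u s) (fun s => g u s))); auto;
  repeat first [apply continuity_2d_pt_plus | apply continuity_2d_pt_mult]; auto.
Qed.

Lemma C1_inv f fu fv : C1_partials f fu fv -> (forall u v, f u v <> 0) ->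
  C1_partials (fun u v => / f u v)
     (fun u v => - fu u v / (f u v * f u v)) (fun u v => - fv u v / (f u v * f u v)).
Proof.
  intros Hf Hnz u v. destruct (Hf u v) as [Du [Dv [Cu Cv]]].
  pose proof (C1_continuity_2d_pt f fu fv u v Hf). pose proof (Hnz u v).
  assert (Cinv : continuity_2d_pt (fun u v => / (f u v * f u v)) u v).
  { apply continuity_2d_pt_inv; [apply continuity_2d_pt_mult; auto|].
    apply Rmult_integral_contrapositive; auto. }
  split; [|split; [|split]].
  - eapply is_derive_val; [apply (is_derive_inv _ _ _ Du); auto | simpl; field; auto].
  - eapply is_derive_val; [apply (is_derive_inv _ _ _ Dv); auto | simpl; field; auto].
  - apply continuity_2d_pt_mult; [apply continuity_2d_pt_opp|]; auto.
  - apply continuity_2d_pt_mult; [apply continuity_2d_pt_opp|]; auto.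
Qed.

Lemma C1_deriv0_const f fu fv : C1_partials f fu fv -> (forall u v, fu u v = 0 /\ fv u v = 0) ->
  forall u v, f u v = f 0 0.
Proof.
  intros Hf H0 u v.
  assert (Du : forall x, is_derive (fun s => f s v) x 0).
  { intros x. destruct (Hf x v) as [D _]. rewrite (proj1 (H0 x v)) in D. exact D. }
  assert (Dv : forall y, is_derive (fun s => f 0 s) y 0).
  { intros y. destruct (Hf 0 y) as [_ [D _]]. rewrite (proj2 (H0 0 y)) in D. exact D. }
  rewrite (deriv0_const _ Du u 0). exact (deriv0_const _ Dv v 0).
Qed.

Lemma linear_bounded_eq0 r0 c K : (forall r, r0 <= r -> Rabs (r * c) <= K) -> c = 0.
Proof.
  intros HB. destruct (Req_dec c 0) as [|Hc]; [assumption|]. exfalso.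
  pose proof (Rabs_pos_lt c Hc) as Hpos.
  set (r := Rmax r0 ((Rabs K + 1) / Rabs c)).
  assert (Hr : (Rabs K + 1) / Rabs c <= r) by apply Rmax_r.
  assert (Hr0 : 0 < r).
  { eapply Rlt_le_trans; [|exact Hr]. apply Rdiv_lt_0_compat; [pose proof (Rabs_pos K)|]; lra. }
  specialize (HB r (Rmax_l _ _)). rewrite Rabs_mult, (Rabs_pos_eq r) in HB by lra.
  apply (Rmult_le_compat_r (Rabs c)) in Hr; [|lra].
  unfold Rdiv in Hr. rewrite Rmult_assoc, Rinv_l, Rmult_1_r in Hr by lra.
  pose proof (Rle_abs K). lra.
Qed.

(* Solutions of the Euler equation [r A' = A] are linear on each half-line. *)
Lemma euler_bounded_pos_eq0 (A dA : R -> R) K :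
  (forall r, is_derive A r (dA r)) -> (forall r, A r = r * dA r) ->
  (forall r, Rabs (A r) <= K) -> forall r, 0 < r -> A r = 0.
Proof.
  intros HD HE HB r0 Hr0.
  assert (Hratio : forall r, r0 <= r -> A r / r = A r0 / r0).
  { intros r Hr. destruct (MVT_gen (fun s => A s / s) r0 r (fun _ => 0)) as [c [_ Ec]].
    - intros x Hx. rewrite Rmin_left, Rmax_right in Hx by lra.
      eapply is_derive_val; [apply is_derive_div; [apply HD | apply is_derive_Rid | lra]|].
      rewrite (HE x). field. lra.
    - intros x Hx. rewrite Rmin_left, Rmax_right in Hx by lra.
      apply continuity_pt_filterlim, (ex_derive_continuous (fun s => A s / s)).
      eexists. apply is_derive_div; [apply HD | apply is_derive_Rid | lra].
    - simpl in Ec. lra. }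
  assert (Hc : A r0 / r0 = 0).
  { apply (linear_bounded_eq0 r0 _ K). intros r Hr.
    rewrite <- (Hratio r Hr). replace (r * (A r / r)) with (A r) by (field; lra). apply HB. }
  apply (f_equal (Rmult r0)) in Hc. rewrite Rmult_0_r in Hc. rewrite <- Hc. field. lra.
Qed.

Lemma euler_bounded_deriv0 (A dA : R -> R) K :
  (forall r, is_derive A r (dA r)) -> (forall r, A r = r * dA r) ->
  (forall r, Rabs (A r) <= K) -> dA 0 = 0.
Proof.
  intros HD HE HB.
  assert (Hneg : forall r, r < 0 -> A r = 0).
  { intros r Hr. replace r with (- - r) by ring.
    apply (euler_bounded_pos_eq0 (fun s => A (- s)) (fun s => - dA (- s)) K); try lra.
    - intros s. eapply is_derive_val.
      + apply (is_derive_comp A (fun s => - s)); [apply HD | apply is_derive_Ropp, is_derive_Rid].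
      + simpl. unfold scal; simpl; unfold mult; simpl. ring.
    - intros s. rewrite HE. ring.
    - intros s; apply HB. }
  assert (Hzero : forall r, A r = 0).
  { intros r. destruct (Rtotal_order r 0) as [H|[H|H]].
    - auto.
    - rewrite HE, H; ring.
    - apply (euler_bounded_pos_eq0 A dA K); auto. }
  rewrite <- (is_derive_unique _ _ _ (HD 0)), (Derive_ext A (fun _ => 0)) by auto.
  apply Derive_const.
Qed.

Lemma Rabs_le_of_sqr_le x K : x * x <= K -> Rabs x <= 1 + K.
Proof.
  intros H. pose proof (Rle_0_sqr x). unfold Rsqr in *.
  destruct (Rle_dec (Rabs x) 1); [lra|].
  rewrite <- (Rabs_pos_eq (x * x)), Rabs_mult in H by lra. nra.
Qed.

(** * Holomorphic functions and Liouville's theorem *)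

(* [holomorphic P Q Pu Pv]: [P + i Q] is a C^1 holomorphic function with derivative
   [Pu - i Pv]; the Cauchy-Riemann equations are built in as [Q_u = - P_v], [Q_v = P_u]. *)
Definition holomorphic (P Q Pu Pv : R -> R -> R) : Prop :=
  C1_partials P Pu Pv /\ C1_partials Q (fun u v => - Pv u v) Pu.

Definition sqnorm (P Q : R -> R -> R) (u v : R) : R := P u v * P u v + Q u v * Q u v.

Lemma holomorphic_mulNi P Q Pu Pv : holomorphic P Q Pu Pv ->
  holomorphic Q (fun u v => - P u v) (fun u v => - Pv u v) Pu.
Proof. intros [HP HQ]. split; [exact HQ | exact (C1_opp _ _ _ HP)]. Qed.

Lemma holomorphic_plus P1 Q1 Pu1 Pv1 P2 Q2 Pu2 Pv2 :
  holomorphic P1 Q1 Pu1 Pv1 -> holomorphic P2 Q2 Pu2 Pv2 ->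
  holomorphic (fun u v => P1 u v + P2 u v) (fun u v => Q1 u v + Q2 u v)
              (fun u v => Pu1 u v + Pu2 u v) (fun u v => Pv1 u v + Pv2 u v).
Proof.
  intros [HP1 HQ1] [HP2 HQ2]. split; [exact (C1_plus _ _ _ _ _ _ HP1 HP2)|].
  eapply C1_ext; [exact (C1_plus _ _ _ _ _ _ HQ1 HQ2) | |]; intros; simpl; ring.
Qed.

Lemma holomorphic_scal s P Q Pu Pv : holomorphic P Q Pu Pv ->
  holomorphic (fun u v => s * P u v) (fun u v => s * Q u v)
              (fun u v => s * Pu u v) (fun u v => s * Pv u v).
Proof.
  intros [HP HQ]. split.
  - eapply C1_ext; [exact (C1_mult _ _ _ _ _ _ (C1_const s) HP) | |]; intros; simpl; ring.
  - eapply C1_ext; [exact (C1_mult _ _ _ _ _ _ (C1_const s) HQ) | |]; intros; simpl; ring.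
Qed.

(* [1 / f = conj f / |f|^2] *)
Lemma holomorphic_inv P Q Pu Pv : holomorphic P Q Pu Pv -> (forall u v, sqnorm P Q u v <> 0) ->
  exists Ru Rv, holomorphic (fun u v => P u v / sqnorm P Q u v)
                            (fun u v => - Q u v / sqnorm P Q u v) Ru Rv.
Proof.
  intros [HP HQ] Hnz.
  assert (HN := C1_plus _ _ _ _ _ _ (C1_mult _ _ _ _ _ _ HP HP) (C1_mult _ _ _ _ _ _ HQ HQ)).
  assert (HI := C1_inv _ _ _ HN Hnz).
  assert (HPI := C1_mult _ _ _ _ _ _ HP HI).
  assert (HQI := C1_mult _ _ _ _ _ _ (C1_opp _ _ _ HQ) HI).
  eexists; eexists; split; [exact HPI|].
  eapply C1_ext; [exact HQI | |]; intros u v; pose proof (Hnz u v); unfold sqnorm in *;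
  simpl; field; auto.
Qed.

Section Liouville.

Variables (P Q Pu Pv : R -> R -> R) (x0 y0 K : R).
Hypothesis Hhol : holomorphic P Q Pu Pv.
Hypothesis Hbound : forall u v, sqnorm P Q u v <= K.

Let X r t := x0 + r * cos t.
Let Y r t := y0 + r * sin t.
(* With [f = P + i Q] on the circle [z = x0 + i y0 + r e^(it)], [F r t = Re (f z e^(-it))]
   and [H r t = - Im (f z e^(-it))]. *)
Let F r t := P (X r t) (Y r t) * cos t + Q (X r t) (Y r t) * sin t.
Let H r t := P (X r t) (Y r t) * sin t - Q (X r t) (Y r t) * cos t.
Let G r t := Pu (X r t) (Y r t).
Let A r := RInt (F r) 0 (2 * PI).
Let dA r := RInt (G r) 0 (2 * PI).

Lemma continuity_2d_pt_X r t : continuity_2d_pt X r t.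
Proof.
  apply continuity_2d_pt_plus; [apply continuity_2d_pt_const|].
  apply continuity_2d_pt_mult;
    [apply continuity_2d_pt_id1 | apply continuity_2d_pt_snd_comp, continuity_cos].
Qed.

Lemma continuity_2d_pt_Y r t : continuity_2d_pt Y r t.
Proof.
  apply continuity_2d_pt_plus; [apply continuity_2d_pt_const|].
  apply continuity_2d_pt_mult;
    [apply continuity_2d_pt_id1 | apply continuity_2d_pt_snd_comp, continuity_sin].
Qed.

Lemma continuity_2d_pt_G r t : continuity_2d_pt G r t.
Proof.
  apply (continuity_2d_pt_comp Pu X Y);
    [apply Hhol | apply continuity_2d_pt_X | apply continuity_2d_pt_Y].
Qed.

Lemma continuity_2d_pt_F r t : continuity_2d_pt F r t.
Proof.
  destruct Hhol as [HP HQ].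
  apply continuity_2d_pt_plus; apply continuity_2d_pt_mult.
  - apply (continuity_2d_pt_comp P X Y);
    [exact (C1_continuity_2d_pt _ _ _ _ _ HP) | apply continuity_2d_pt_X
    | apply continuity_2d_pt_Y].
  - apply continuity_2d_pt_snd_comp, continuity_cos.
  - apply (continuity_2d_pt_comp Q X Y);
    [exact (C1_continuity_2d_pt _ _ _ _ _ HQ) | apply continuity_2d_pt_X
    | apply continuity_2d_pt_Y].
  - apply continuity_2d_pt_snd_comp, continuity_sin.
Qed.

Lemma is_derive_F_r r t : is_derive (fun r => F r t) r (G r t).
Proof.
  destruct Hhol as [HP HQ].
  assert (DX : is_derive (fun r => X r t) r (cos t)) by (unfold X; auto_derive; auto; ring).
  assert (DY : is_derive (fun r => Y r t) r (sin t)) by (unfold Y; auto_derive; auto; ring).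
  eapply is_derive_val.
  - apply is_derive_Rplus; apply is_derive_Rmult.
    + exact (C1_is_derive_comp _ _ _ _ _ _ _ _ HP DX DY).
    + apply is_derive_Rconst.
    + exact (C1_is_derive_comp _ _ _ _ _ _ _ _ HQ DX DY).
    + apply is_derive_Rconst.
  - rewrite <- (Rmult_1_r (G r t)), <- (sin2_cos2 t). unfold G, Rsqr. ring.
Qed.

Lemma is_derive_H_t r t : is_derive (fun t => H r t) t (F r t - r * G r t).
Proof.
  destruct Hhol as [HP HQ].
  assert (DX : is_derive (fun t => X r t) t (- r * sin t)) by (unfold X; auto_derive; auto; ring).
  assert (DY : is_derive (fun t => Y r t) t (r * cos t)) by (unfold Y; auto_derive; auto; ring).
  eapply is_derive_val.
  - apply is_derive_Rminus; apply is_derive_Rmult.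
    + exact (C1_is_derive_comp _ _ _ _ _ _ _ _ HP DX DY).
    + apply is_derive_sin.
    + exact (C1_is_derive_comp _ _ _ _ _ _ _ _ HQ DX DY).
    + apply is_derive_cos.
  - rewrite <- (Rmult_1_r (G r t)), <- (sin2_cos2 t). unfold F, G, Rsqr. ring.
Qed.

Lemma ex_RInt_F r : ex_RInt (F r) 0 (2 * PI).
Proof.
  apply (@ex_RInt_continuous R_CompleteNormedModule).
  intros; apply continuity_2d_pt_snd, continuity_2d_pt_F.
Qed.

Lemma ex_RInt_G r : ex_RInt (G r) 0 (2 * PI).
Proof.
  apply (@ex_RInt_continuous R_CompleteNormedModule).
  intros; apply continuity_2d_pt_snd, continuity_2d_pt_G.
Qed.

Lemma is_derive_A r : is_derive A r (dA r).
Proof.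
  unfold A, dA. rewrite (RInt_ext (G r) (fun t => Derive (fun u => F u t) r))
    by (intros; symmetry; apply is_derive_unique, is_derive_F_r).
  apply (is_derive_RInt_param F).
  - apply filter_forall. intros. eexists. apply is_derive_F_r.
  - intros. apply continuity_2d_pt_ext with G; [|apply continuity_2d_pt_G].
    intros; symmetry; apply is_derive_unique, is_derive_F_r.
  - apply filter_forall. intros; apply ex_RInt_F.
Qed.

(* [H r] is 2 PI-periodic, so the integral of its derivative [F - r G] vanishes. *)
Lemma A_eq_mul_deriv r : A r = r * dA r.
Proof.
  assert (I1 : is_RInt (fun t => F r t - r * G r t) 0 (2 * PI) (minus (H r (2 * PI)) (H r 0))).
  { apply (is_RInt_derive (fun t => H r t)).
    - intros; apply is_derive_H_t.
    - intros. apply (continuity_2d_pt_snd (fun r t => F r t - r * G r t)).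
      apply continuity_2d_pt_minus; [apply continuity_2d_pt_F|].
      apply continuity_2d_pt_mult; [apply continuity_2d_pt_id1 | apply continuity_2d_pt_G]. }
  assert (Hper : H r (2 * PI) = H r 0).
  { unfold H, X, Y. rewrite cos_2PI, sin_2PI, cos_0, sin_0. reflexivity. }
  rewrite Hper, minus_eq_zero in I1.
  assert (I2 : is_RInt (fun t => F r t - r * G r t) 0 (2 * PI) (A r - r * dA r)).
  { apply (is_RInt_minus (F r) (fun t => r * G r t)).
    - apply (RInt_correct (V := R_CompleteNormedModule)), ex_RInt_F.
    - apply (is_RInt_scal (G r)), (RInt_correct (V := R_CompleteNormedModule)), ex_RInt_G. }
  apply (is_RInt_unique (V := R_CompleteNormedModule)) in I1, I2.
  rewrite I1 in I2. change (0 = A r - r * dA r) in I2. lra.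
Qed.

Lemma A_bounded r : Rabs (A r) <= 2 * PI * (1 + K).
Proof.
  pose proof PI_RGT_0.
  replace (2 * PI * (1 + K)) with ((2 * PI - 0) * (1 + K)) by ring.
  apply abs_RInt_le_const; [lra | apply ex_RInt_F|].
  intros t _. apply Rabs_le_of_sqr_le. unfold F.
  set (p := P (X r t) (Y r t)); set (q := Q (X r t) (Y r t)).
  pose proof (Hbound (X r t) (Y r t)) as HK. unfold sqnorm in HK; fold p q in HK.
  assert (CS : (p * cos t + q * sin t) * (p * cos t + q * sin t)
               + (p * sin t - q * cos t) * (p * sin t - q * cos t) = p * p + q * q).
  { rewrite <- (Rmult_1_r (p * p + q * q)), <- (sin2_cos2 t). unfold Rsqr. ring. }
  pose proof (Rle_0_sqr (p * sin t - q * cos t)). unfold Rsqr in *. lra.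
Qed.

Lemma liouville_Pu_eq0 : Pu x0 y0 = 0.
Proof.
  assert (Z := euler_bounded_deriv0 A dA _ is_derive_A A_eq_mul_deriv A_bounded).
  unfold dA, G, X, Y in Z.
  rewrite (RInt_ext _ (fun _ => Pu x0 y0)) in Z
    by (intros; rewrite !Rmult_0_l, !Rplus_0_r; reflexivity).
  rewrite RInt_const in Z. simpl in Z. unfold scal in Z; simpl in Z; unfold mult in Z; simpl in Z.
  pose proof PI_RGT_0. nra.
Qed.

End Liouville.

Lemma liouville_deriv0 P Q Pu Pv K : holomorphic P Q Pu Pv ->
  (forall u v, sqnorm P Q u v <= K) -> forall u v, Pu u v = 0 /\ Pv u v = 0.
Proof.
  intros Hhol HK u v. split; [exact (liouville_Pu_eq0 P Q Pu Pv u v K Hhol HK)|].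
  assert (HK' : forall u v, sqnorm Q (fun u v => - P u v) u v <= K).
  { intros a b. unfold sqnorm. replace (Q a b * Q a b + - P a b * - P a b) with (sqnorm P Q a b)
      by (unfold sqnorm; ring). apply HK. }
  pose proof (liouville_Pu_eq0 _ _ _ _ u v K (holomorphic_mulNi _ _ _ _ Hhol) HK'). lra.
Qed.

Theorem liouville P Q Pu Pv K : holomorphic P Q Pu Pv ->
  (forall u v, sqnorm P Q u v <= K) -> forall u v, P u v = P 0 0 /\ Q u v = Q 0 0.
Proof.
  intros Hhol HK. pose proof (liouville_deriv0 P Q Pu Pv K Hhol HK) as H0.
  destruct Hhol as [HP HQ]. intros u v. split.
  - exact (C1_deriv0_const _ _ _ HP H0 u v).
  - apply (C1_deriv0_const _ _ _ HQ). intros a b. destruct (H0 a b) as [-> ->]. split; ring.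
Qed.

(* Apply Liouville to [1 / f], whose modulus is bounded by [1 / m]. *)
Lemma holomorphic_sqnorm_const P Q Pu Pv m : holomorphic P Q Pu Pv -> 0 < m ->
  (forall u v, m <= sqnorm P Q u v) -> forall u v, sqnorm P Q u v = sqnorm P Q 0 0.
Proof.
  intros Hhol Hm Hlow.
  assert (Hpos : forall u v, 0 < sqnorm P Q u v) by (intros; specialize (Hlow u v); lra).
  destruct (holomorphic_inv P Q Pu Pv Hhol) as [Ru [Rv Hinv]];
    [intros u v; specialize (Hpos u v); lra|].
  set (Pi := fun u v => P u v / sqnorm P Q u v) in Hinv.
  set (Qi := fun u v => - Q u v / sqnorm P Q u v) in Hinv.
  assert (Hsq_inv : forall u v, sqnorm Pi Qi u v = / sqnorm P Q u v).
  { intros u v. specialize (Hpos u v). unfold Pi, Qi, sqnorm in *. field. lra. }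
  assert (Hconst : forall u v, Pi u v = Pi 0 0 /\ Qi u v = Qi 0 0).
  { apply (liouville _ _ _ _ (/ m) Hinv). intros u v. rewrite Hsq_inv.
    apply Rinv_le_contravar; auto. }
  intros u v. rewrite <- (Rinv_inv (sqnorm P Q u v)), <- (Rinv_inv (sqnorm P Q 0 0)), <- !Hsq_inv.
  unfold sqnorm at 1 2. destruct (Hconst u v) as [-> ->]. reflexivity.
Qed.

(** * Harmonic maps *)

Lemma is_derive_du f u v : has_partials f -> is_derive (fun s => f s v) u (du f u v).
Proof. intros H. apply Derive_correct, (proj1 (H u v)). Qed.

Lemma is_derive_dv f u v : has_partials f -> is_derive (fun s => f u s) v (dv f u v).
Proof. intros H. apply Derive_correct, (proj2 (H u v)). Qed.

Lemma C2_du_dv f u v : C2 f -> du (dv f) u v = dv (du f) u v.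
Proof.
  intros [H1 [H2 [H3 H4]]]. unfold du, dv. apply Schwarz.
  - exists (mkposreal 1 Rlt_0_1). intros a b _ _.
    split; [|split; [|split]]; [exact (proj1 (H1 a b)) | exact (proj2 (H1 a b))
                               | exact (proj1 (H3 a b)) | exact (proj2 (H2 a b))].
  - destruct (H4 u v) as [_ [_ [_ [_ [_ [Cuv _]]]]]]; exact Cuv.
  - destruct (H4 u v) as [_ [_ [_ [_ [Cvu _]]]]]; exact Cvu.
Qed.

Lemma harmonic_holomorphic_grad phi : harmonic phi ->
  holomorphic (du phi) (fun u v => - dv phi u v) (du (du phi)) (dv (du phi)).
Proof.
  intros [HC Hlap]. pose proof HC as [H1 [H2 [H3 H4]]].
  split; intros u v; destruct (H4 u v) as [_ [_ [_ [Cuu [Cvu [Cuv Cvv]]]]]].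
  - split; [|split; [|split]]; auto; [apply is_derive_du | apply is_derive_dv]; exact H2.
  - split; [|split; [|split]].
    + apply is_derive_Ropp. rewrite <- (C2_du_dv phi u v HC). apply is_derive_du, H3.
    + eapply is_derive_val; [apply is_derive_Ropp, is_derive_dv, H3|]. specialize (Hlap u v). lra.
    + apply continuity_2d_pt_opp, Cvu.
    + exact Cuu.
Qed.

Lemma affine_of_const_partials f a b : has_partials f ->
  (forall u v, du f u v = a /\ dv f u v = b) -> forall u v, f u v = a * u + b * v + f 0 0.
Proof.
  intros Hf Hab u v.
  assert (Dlin : forall c x, is_derive (fun t => c * t) x c) by (intros; auto_derive; auto; ring).
  assert (Eu := deriv0_const (fun x => f x v - a * x)).
  assert (Ev := deriv0_const (fun y => f 0 y - b * y)).
  enough (f u v - a * u = f 0 v - a * 0 /\ f 0 v - b * v = f 0 0 - b * 0) by lra. split.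
  - apply Eu. intros x. eapply is_derive_val.
    + apply is_derive_Rminus; [apply is_derive_du, Hf | apply Dlin].
    + rewrite (proj1 (Hab x v)). ring.
  - apply Ev. intros y. eapply is_derive_val.
    + apply is_derive_Rminus; [apply is_derive_dv, Hf | apply Dlin].
    + rewrite (proj2 (Hab 0 y)). ring.
Qed.

Lemma harmonic_bounded_grad_affine phi K : harmonic phi ->
  (forall u v, sqnorm (du phi) (dv phi) u v <= K) ->
  forall u v, phi u v = du phi 0 0 * u + dv phi 0 0 * v + phi 0 0.
Proof.
  intros Hphi HK. apply affine_of_const_partials; [apply Hphi|].
  intros u v.
  destruct (liouville _ _ _ _ K (harmonic_holomorphic_grad phi Hphi)) with u v as [Eu Ev].
  - intros a b. unfold sqnorm in *. specialize (HK a b). lra.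
  - split; lra.
Qed.

(* Intermediate value theorem along the segment from the origin to [(u, v)]. *)
Lemma continuity_2d_pt_nonzero_pos J : (forall u v, continuity_2d_pt J u v) ->
  (forall u v, J u v <> 0) -> 0 < J 0 0 -> forall u v, 0 < J u v.
Proof.
  intros HJ Hnz H0 u v. destruct (Rlt_dec 0 (J u v)) as [|Hle]; [assumption|]. exfalso.
  set (g := fun t => J (t * u) (t * v)).
  assert (Hg : continuity g).
  { intros t. apply continuity_pt_filterlim.
    apply (continuity_2d_pt_snd (fun _ b => J (b * u) (b * v)) 0 t).
    apply (continuity_2d_pt_comp J (fun _ b => b * u) (fun _ b => b * v)); [apply HJ| |];
    apply continuity_2d_pt_mult; try apply continuity_2d_pt_id2; apply continuity_2d_pt_const. }
  destruct (IVT_gen g 0 1 0 Hg) as [t [_ Ht]].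
  { unfold g. rewrite !Rmult_0_l, !Rmult_1_l, Rmin_right, Rmax_left by lra. lra. }
  exact (Hnz _ _ Ht).
Qed.

Lemma continuity_2d_pt_nonzero_sign J : (forall u v, continuity_2d_pt J u v) ->
  (forall u v, J u v <> 0) -> (forall u v, 0 < J u v) \/ (forall u v, J u v < 0).
Proof.
  intros HJ Hnz. destruct (Rlt_dec 0 (J 0 0)) as [Hpos|Hneg].
  - left. exact (continuity_2d_pt_nonzero_pos J HJ Hnz Hpos).
  - right. intros u v.
    enough (0 < - J u v) by lra.
    apply (continuity_2d_pt_nonzero_pos (fun u v => - J u v)).
    + intros; apply continuity_2d_pt_opp, HJ.
    + intros a b. specialize (Hnz a b). lra.
    + specialize (Hnz 0 0). lra.
Qed.

Lemma continuity_2d_pt_jac phi psi u v : C2 phi -> C2 psi -> continuity_2d_pt (jac phi psi) u v.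
Proof.
  intros [_ [_ [_ Hphi]]] [_ [_ [_ Hpsi]]].
  destruct (Hphi u v) as [_ [Cu [Cv _]]]. destruct (Hpsi u v) as [_ [Du [Dv _]]].
  unfold jac. apply continuity_2d_pt_minus; apply continuity_2d_pt_mult; assumption.
Qed.

Lemma affine_of_signed_jac_ge phi psi s l : harmonic phi -> harmonic psi -> s * s = 1 ->
  0 < l -> (forall u v, l <= s * jac phi psi u v) -> affine_map phi psi.
Proof.
  intros Hphi Hpsi Hs Hl HJ.
  assert (Hhol := holomorphic_plus _ _ _ _ _ _ _ _ (harmonic_holomorphic_grad psi Hpsi)
    (holomorphic_scal s _ _ _ _ (holomorphic_mulNi _ _ _ _ (harmonic_holomorphic_grad phi Hphi)))).
  set (N := sqnorm (fun u v => du psi u v + s * - dv phi u v)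
                   (fun u v => - dv psi u v + s * - du phi u v)) in *.
  assert (HN : forall u v, N u v = sqnorm (du psi) (dv psi) u v + sqnorm (du phi) (dv phi) u v
                                 + 2 * (s * jac phi psi u v)).
  { intros u v. unfold N, sqnorm, jac.
    rewrite <- (Rmult_1_l (du phi u v * du phi u v + dv phi u v * dv phi u v)), <- Hs. ring. }
  assert (Hsq : forall f u v, 0 <= sqnorm (du f) (dv f) u v).
  { intros f u v. unfold sqnorm.
    pose proof (Rle_0_sqr (du f u v)); pose proof (Rle_0_sqr (dv f u v)). unfold Rsqr in *. lra. }
  assert (Hconst : forall u v, N u v = N 0 0).
  { apply (holomorphic_sqnorm_const _ _ _ _ (2 * l) Hhol); [lra|].
    intros u v. fold (N u v). rewrite HN. specialize (HJ u v).
    pose proof (Hsq phi u v); pose proof (Hsq psi u v). lra. }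
  assert (Hgrad : forall u v, sqnorm (du phi) (dv phi) u v <= N 0 0
                              /\ sqnorm (du psi) (dv psi) u v <= N 0 0).
  { intros u v. rewrite <- (Hconst u v), HN. specialize (HJ u v).
    pose proof (Hsq phi u v); pose proof (Hsq psi u v). split; lra. }
  exists (du phi 0 0), (dv phi 0 0), (phi 0 0), (du psi 0 0), (dv psi 0 0), (psi 0 0).
  intros u v. split.
  - apply (harmonic_bounded_grad_affine phi (N 0 0) Hphi). intros a b. apply Hgrad.
  - apply (harmonic_bounded_grad_affine psi (N 0 0) Hpsi). intros a b. apply Hgrad.
Qed.

Lemma affine_of_abs_jac_ge phi psi l : harmonic phi -> harmonic psi -> 0 < l ->
  (forall u v, l <= Rabs (jac phi psi u v)) -> affine_map phi psi.
Proof.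
  intros Hphi Hpsi Hl HJ.
  assert (Hnz : forall u v, jac phi psi u v <> 0).
  { intros u v Hz. specialize (HJ u v). rewrite Hz, Rabs_R0 in HJ. lra. }
  destruct (continuity_2d_pt_nonzero_sign (jac phi psi)) as [Hpos|Hneg]; auto.
  - intros; apply continuity_2d_pt_jac; [apply Hphi | apply Hpsi].
  - apply (affine_of_signed_jac_ge phi psi 1 l); auto; [ring|].
    intros u v. specialize (HJ u v). rewrite Rabs_pos_eq in HJ by (left; apply Hpos). lra.
  - apply (affine_of_signed_jac_ge phi psi (-1) l); auto; [ring|].
    intros u v. specialize (HJ u v). rewrite Rabs_left in HJ by apply Hneg. lra.
Qed.

Theorem lemma3p2 (phi psi : R -> R -> R) :
  harmonic phi -> harmonic psi -> ~ affine_map phi psi ->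
  is_glb_Rbar (fun y => exists u v, y = Rabs (jac phi psi u v)) (Finite 0).
Proof.
  intros Hphi Hpsi Hnaff. split.
  - intros y [u [v ->]]. apply Rabs_pos.
  - intros [l| |] Hlb; simpl; auto.
    + destruct (Rle_dec l 0) as [|Hl]; [assumption|]. exfalso. apply Hnaff.
      apply (affine_of_abs_jac_ge phi psi l Hphi Hpsi); [lra|].
      intros u v. apply (Hlb _ (ex_intro _ u (ex_intro _ v eq_refl))).
    + exact (Hlb _ (ex_intro _ 0 (ex_intro _ 0 eq_refl))).
Qed.
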